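(* Let $E$ be a real Banach space and $\mathcal{C}\subset E$ a regular Birkhoff cone with $\ell\in E'$, $\|\ell\|=1$, and $K<\infty$ such that $\frac1K\|u\|\le\langle\ell,u\rangle\le\|u\|$ for $u\in\mathcal{C}$. Let $\mathcal{C}_1\subset\mathcal{C}$ be a subcone with finite Hilbert diameter $\Delta=\sup\{d_{\mathcal{C}}(a,b):a,b\in\mathcal{C}_1\setminus\{0\}\}<+\infty$. Suppose there are $x\in\mathcal{C}_1$ with $\langle\ell,x\rangle=1$ and $r>0$ with $B(x,r)\subset\mathcal{C}_1$. Then for every $y\in\mathcal{C}_1$, \[B_E\Big(y,\frac1K re^{-\Delta}\|y\|\Big)\subset\mathcal{C}.\]
   Context: A Birkhoff cone is a closed convex set $\mathcal{C}\subset E$ with $\mathbb{R}_+\mathcal{C}=\mathcal{C}$ and $\mathcal{C}\cap(-\mathcal{C})=\{0\}$; regular means it has non-empty interior and the stated outer regularity functional exists. A subcone is a subset $\mathcal{C}_1\subset\mathcal{C}$ with $\mathbb{R}_+\mathcal{C}_1=\mathcal{C}_1$. Hilbert metric: $\delta(a,b)=\inf\{t>0:ta-b\in\mathcal{C}\}$, $d_{\mathcal{C}}(a,b)=\log(\delta(a,b)\delta(b,a))$ for $a,b\in\mathcal{C}\setminus\{0\}$. *)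

From HB Require Import structures.
From mathcomp Require Import all_boot all_order all_algebra.
From mathcomp Require Import all_classical all_reals all_analysis.
Set Implicit Arguments. Unset Strict Implicit. Unset Printing Implicit Defensive.
Import Order.TTheory GRing.Theory Num.Theory.
Import numFieldNormedType.Exports.
Local Open Scope classical_set_scope.
Local Open Scope ring_scope.

Section BirkhoffCones.
Variables (R : realType) (E : normedModType R).

Definition cone_closed_Rplus (A : set E) : Prop :=
  [set z | exists t a, 0 <= t /\ A a /\ z = t *: a] = A.

Definition birkhoff_cone (C : set E) : Prop :=
  [/\ closed C,
      (forall a b t, C a -> C b -> 0 <= t <= 1 -> C (t *: a + (1 - t) *: b)),
      cone_closed_Rplus C &
      C `&` [set z | C (- z)] = [set 0]].

Definition subcone (C1 C : set E) : Prop := C1 `<=` C /\ cone_closed_Rplus C1.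

Definition linear_functional (l : E -> R) : Prop :=
  forall (a : R) (u v : E), l (a *: u + v) = a * l u + l v.

Definition opnorm_eq1 (l : E -> R) : Prop :=
  (forall u : E, `|l u| <= `|u|) /\
  (forall e : R, 0 < e -> exists u : E, `|u| <= 1 /\ 1 - e < `|l u|).

(* delta(a,b) = inf { t > 0 : t a - b ∈ C }  (+oo if the set is empty) *)
Definition hdelta (C : set E) (a b : E) : \bar R :=
  ereal_inf [set v | exists t : R, 0 < t /\ C (t *: a - b) /\ v = t%:E].

Definition hilbert_d (C : set E) (a b : E) : \bar R :=
  match hdelta C a b, hdelta C b a with
  | EFin r1, EFin r2 => (ln (r1 * r2))%:E
  | _, _ => +oo%E
  end.

Definition hilbert_diam (C C1 : set E) : \bar R :=
  ereal_sup [set v | exists a b, C1 a /\ a != 0 /\ C1 b /\ b != 0 /\ v = hilbert_d C a b].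

End BirkhoffCones.

From HB Require Import structures.
From mathcomp Require Import all_boot all_order all_algebra.
From mathcomp Require Import all_classical all_reals all_analysis.
From mathcomp Require Import ring lra.
Import Order.TTheory GRing.Theory Num.Theory.
Import numFieldNormedType.Exports.
Local Open Scope classical_set_scope.
Local Open Scope ring_scope.

(* If the ball [B(x, r)] and the point [s y - x] lie in the cone, then so does
   [B(y, r / s)]: for [w] in it, [s w = (s y - x) + (x + s (w - y))] is a sum
   of two points of the cone.  It remains to bound [delta(y, x)], the infimum
   of such [s].  As [l] is nonnegative on the cone, [delta(x, y) >= <l, y>]
   and [delta(y, x) >= 1 / <l, y>]; their product is at most [e^Delta], so
   [delta(y, x) <= e^Delta / <l, y> <= K e^Delta / |y|]. *)

Section ConvexCone.
Set Implicit Arguments. Unset Strict Implicit.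
Variables (R : realType) (E : normedModType R) (C : set E).
Hypothesis C_convex :
  forall a b t, C a -> C b -> 0 <= t <= 1 -> C (t *: a + (1 - t) *: b).
Hypothesis C_cone : cone_closed_Rplus C.

Lemma coneZ t a : 0 <= t -> C a -> C (t *: a).
Proof. by move=> t0 Ca; rewrite -C_cone; exists t, a. Qed.

Lemma coneD a b : C a -> C b -> C (a + b).
Proof.
move=> Ca Cb; have half01 : 0 <= (2^-1 : R) <= 1.
  by apply/andP; split; [rewrite invr_ge0 | rewrite invf_le1 ?ler1n].
have -> : a + b = 2 *: (2^-1 *: a + (1 - 2^-1) *: b).
  have -> : 1 - 2^-1 = 2^-1 :> R by field.
  by rewrite scalerDr !scalerA mulfV ?pnatr_eq0 // !scale1r.
exact/coneZ/C_convex.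
Qed.

Lemma cone_ball_shift x y r s :
  ball x r `<=` C -> 0 < s -> C (s *: y - x) -> ball y (r / s) `<=` C.
Proof.
move=> Bx s0 Cyx w; rewrite -ball_normE /= ltr_pdivlMr // => yw.
have Cxw : C (x + s *: (w - y)).
  apply: Bx; rewrite -ball_normE /= opprD addrA subrr add0r normrN normrZ.
  by rewrite gtr0_norm // distrC mulrC.
have Csw : C (s *: w).
  have -> : s *: w = (s *: y - x) + (x + s *: (w - y)).
    by rewrite scalerBr addrA subrK addrC subrK.
  exact: coneD.
have si_ge0 : 0 <= s^-1 by rewrite invr_ge0 ltW.
by have := coneZ si_ge0 Csw; rewrite scalerA mulVf ?gt_eqF // scale1r.
Qed.

Lemma cone_ball_hdelta x y r d :
  ball x r `<=` C -> 0 < r -> 0 < d -> (hdelta C y x <= d%:E)%E ->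
  ball y (r / d) `<=` C.
Proof.
move=> Bx r0 d0 dyx w; rewrite -ball_normE /= => yw.
pose rho := (`|y - w| + r / d) / 2.
have rho0 : 0 < rho by rewrite divr_gt0 // ltr_wpDl // divr_gt0.
have [yw_rho rho_rd] : `|y - w| < rho /\ rho < r / d by rewrite /rho; split; lra.
have d_lt : (hdelta C y x < (r / rho)%:E)%E.
  apply: le_lt_trans dyx _; rewrite lte_fin ltr_pdivlMr // mulrC -ltr_pdivlMr //.
have [_ [s [s0 [Cs ->]]]] := ereal_inf_lt d_lt; rewrite lte_fin => s_lt.
apply: (cone_ball_shift Bx s0 Cs); rewrite -ball_normE /=.
by rewrite (lt_le_trans yw_rho) // ler_pdivlMr // mulrC -ler_pdivlMr // ltW.
Qed.

End ConvexCone.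

Section HilbertMetric.
Set Implicit Arguments. Unset Strict Implicit.
Variables (R : realType) (E : normedModType R) (C : set E).

Lemma hilbert_d_gtNy a b : (-oo < hilbert_d C a b)%E.
Proof.
rewrite /hilbert_d.
by case: (hdelta C a b) => [?| |]; case: (hdelta C b a) => [?| |]; rewrite ?ltNyr.
Qed.

Lemma hdelta_le_hilbert_d a b m D :
  0 < m -> (m%:E <= hdelta C a b)%E -> (0 < hdelta C b a)%E ->
  (hilbert_d C a b <= D%:E)%E -> (hdelta C b a <= (expR D / m)%:E)%E.
Proof.
rewrite /hilbert_d => m0.
case: (hdelta C a b) => [t| |] //; case: (hdelta C b a) => [s| |] //.
rewrite !lee_fin lte_fin => mt s0 lnD.
have t0 : 0 < t by apply: lt_le_trans mt.
have ts_le : t * s <= expR D.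
  by rewrite -(lnK (_ : t * s \in Num.pos)) ?ler_expR // posrE mulr_gt0.
rewrite ler_pdivlMr // mulrC (le_trans _ ts_le) //.
by rewrite ler_wpM2r // ltW.
Qed.

End HilbertMetric.

Section LinearFunctional.
Set Implicit Arguments. Unset Strict Implicit.
Variables (R : realType) (E : normedModType R) (l : E -> R).
Hypothesis l_linear : linear_functional l.

Lemma linear_functional0 : l 0 = 0.
Proof.
apply: (addrI (l 0)); rewrite addr0.
by have := l_linear 1 0 0; rewrite scale1r addr0 mul1r.
Qed.

Lemma linear_functionalZ a u : l (a *: u) = a * l u.
Proof. by have := l_linear a u 0; rewrite !addr0 linear_functional0 addr0. Qed.

Lemma linear_functionalB u v : l (u - v) = l u - l v.
Proof.
have := l_linear 1 u (- v); rewrite scale1r mul1r => ->.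
by rewrite -scaleN1r linear_functionalZ mulN1r.
Qed.

Lemma hdelta_ge_ratio (C : set E) a b :
  (forall u, C u -> 0 <= l u) -> 0 < l a -> ((l b / l a)%:E <= hdelta C a b)%E.
Proof.
move=> l_ge0 la0; apply/ereal_infP => _ [t [_ [Ct ->]]].
rewrite lee_fin ler_pdivrMr // -subr_ge0 -linear_functionalZ -linear_functionalB.
exact: l_ge0.
Qed.

Lemma hdelta_le_hilbert_d_normalized (C : set E) x y D :
  (forall u, C u -> 0 <= l u) -> l x = 1 -> 0 < l y ->
  (hilbert_d C x y <= D%:E)%E -> (hdelta C y x <= (expR D / l y)%:E)%E.
Proof.
move=> l_ge0 lx1 ly0; have lx0 : 0 < l x by rewrite lx1.
apply: hdelta_le_hilbert_d => //.
  by have := hdelta_ge_ratio y l_ge0 lx0; rewrite lx1 divr1.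
apply: lt_le_trans (hdelta_ge_ratio x l_ge0 ly0).
by rewrite lx1 lte_fin mul1r invr_gt0.
Qed.

End LinearFunctional.

Theorem lemmaA10 (R : realType) (E : completeNormedModType R)
    (C C1 : set E) (l : E -> R) (K : R) (x : E) (r : R) :
  birkhoff_cone C ->
  interior C !=set0 ->
  linear_functional l -> opnorm_eq1 l ->
  0 < K ->
  (forall u, C u -> K^-1 * `|u| <= l u /\ l u <= `|u|) ->
  subcone C1 C ->
  (hilbert_diam C C1 < +oo)%E ->
  C1 x -> l x = 1 ->
  0 < r -> ball x r `<=` C1 ->
  forall y, C1 y ->
    ball y (K^-1 * r * expR (- fine (hilbert_diam C C1)) * `|y|) `<=` C.
Proof.
move=> [_ Cconvex Ccone _] _ llin _ K0 Kl [C1C _] diam_fin C1x lx1 r0 Bx y C1y.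
have l_ge0 u : C u -> 0 <= l u.
  by move=> /Kl[lu _]; apply: le_trans lu; rewrite mulr_ge0 // invr_ge0 ltW.
have [->|y0] := eqVneq y 0.
  by move=> w; rewrite -ball_normE /= normr0 mulr0 ltNge normr_ge0.
have y_pos : 0 < `|y| by rewrite normr_gt0.
have ly_ge : K^-1 * `|y| <= l y by have [] := Kl y (C1C _ C1y).
have ly0 : 0 < l y by apply: lt_le_trans ly_ge; rewrite mulr_gt0 ?invr_gt0.
have x_neq0 : x != 0.
  apply: contra_eq_neq lx1 => ->.
  by rewrite linear_functional0 // eq_sym oner_eq0.
have dxy : (hilbert_d C x y <= hilbert_diam C C1)%E.
  by apply: ereal_sup_ubound; exists x, y.
have diam_num : hilbert_diam C C1 \is a fin_num.
  by rewrite fin_numE -ltNye -ltey (lt_le_trans (hilbert_d_gtNy C x y) dxy).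
set D := fine (hilbert_diam C C1); rewrite -(fineK diam_num) -/D in dxy.
have dyx := hdelta_le_hilbert_d_normalized llin l_ge0 lx1 ly0 dxy.
have d_gt0 : 0 < expR D / l y by rewrite divr_gt0 ?expR_gt0.
have Bx_C : ball x r `<=` C := subset_trans Bx C1C.
apply: subset_trans (cone_ball_hdelta Cconvex Ccone Bx_C r0 d_gt0 dyx).
apply: le_ball; rewrite invf_div mulrA ler_pdivlMr ?expR_gt0 //.
have -> : K^-1 * r * expR (- D) * `|y| * expR D = r * (K^-1 * `|y|).
  by rewrite expRN; field; rewrite !gt_eqF ?expR_gt0.
by rewrite ler_wpM2l // ltW.
Qed.
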